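(* Let $g(x)=\sum_{n\ge 1}\frac{2\,(4n+1)!}{(n+1)!\,(3n+2)!}\,x^n$, regarded as a formal power series. For all integers $n\ge 1$, $$\frac{[x^n]\,(g(x))^2}{[x^n]\,g(x)}=\frac{10(n-1)(n^2+14n+12)}{3(3n+5)(3n+4)(n+2)}.$$
   Context: For a formal power series $f(x)$, $[x^n]f(x)$ denotes the coefficient of $x^n$ in $f(x)$. *)

From HB Require Import structures.
From mathcomp Require Import all_boot all_order all_algebra.
Set Implicit Arguments. Unset Strict Implicit. Unset Printing Implicit Defensive.
Import Order.TTheory GRing.Theory Num.Theory.
Local Open Scope ring_scope.

Definition fps := nat -> rat.

Definition fps_mul (f h : fps) : fps :=
  fun n => \sum_(k < n.+1) f k * h (n - k)%N.

Definition g : fps :=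
  fun n => if n == 0%N then 0
           else (2 * (4 * n + 1)`!)%:R / (((n + 1)`!)%:R * ((3 * n + 2)`!)%:R).

From HB Require Import structures.
From mathcomp Require Import all_boot all_order all_algebra.
From mathcomp Require Import ring.
Import Order.TTheory GRing.Theory Num.Theory.
Local Open Scope ring_scope.

(* Let B = 1 + x B^4. Lagrange inversion gives [x^n] B^r = r/(4n+r) C(4n+r, n),
   and comparing coefficients shows g = 2 B^2 - B^3 - 1. Since B^a B^b = B^(a+b),
   g^2 = 4 B^4 - 4 B^5 + B^6 - 4 B^2 + 2 B^3 + 1, and as [x^n] B^(r+1) is an
   explicit rational multiple of [x^n] B^r, both [x^n] g^2 and [x^n] g are
   rational functions of n times [x^n] B. *)

(* [fuss m r] is B^r for B = 1 + x B^(m+1); the closed form of its coefficients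
   serves as the definition, and B^(r+1) = B^r + x B^(r+m+1) is proved as [fussS]. *)
Definition fuss (m r : nat) : fps :=
  fun n => if r is j.+1 then (r * (m.+1 * n + j)`!)%:R / ((n`!)%:R * ((m * n + r)`!)%:R)
           else (n == 0)%:R.

Arguments fuss : simpl never.

(* Side conditions of [field] here are casts of positive naturals once folded back. *)
Ltac natr_neq0 :=
  do ?[rewrite -!(natrM, natrD) | rewrite !(nat1r, natr1)];
  rewrite !pnatr_eq0 -!lt0n ?fact_gt0 ?addn_gt0 ?orbT.

Section FussCatalan.

Variable m : nat.

Lemma fuss_r0 r : fuss m r 0 = 1.
Proof.
case: r => [|j]; rewrite /fuss //=.
by rewrite !muln0 !add0n fact0 mul1r -factS divff // pnatr_eq0 -lt0n fact_gt0.
Qed.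

Lemma fuss_neq0 j n : fuss m j.+1 n != 0.
Proof.
by rewrite /fuss mulf_neq0 ?invr_neq0 ?mulf_neq0 // pnatr_eq0 -lt0n ?muln_gt0 fact_gt0.
Qed.

Lemma fussSr j n :
  fuss m j.+2 n =
  (j.+2 * (m.+1 * n + j.+1))%:R / (j.+1 * (m * n + j.+2))%:R * fuss m j.+1 n.
Proof. by rewrite /fuss !addnS !factS; field; natr_neq0. Qed.

Lemma fussS r n : fuss m r.+1 n.+1 = fuss m r n.+1 + fuss m (r + m.+1) n.
Proof.
have mS_nS : (m.+1 * n.+1 = (m.+1 * n + m).+1)%N by ring.
have m_nS : (m * n.+1 = m * n + m)%N by ring.
case: r => [|j]; rewrite /fuss /= mS_nS m_nS.
  by rewrite add0r !addnS !add0n !addn0 !factS; field; natr_neq0.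
have -> : (m.+1 * n + (j + m.+1) = (m.+1 * n + m + j).+1)%N by ring.
have -> : (m * n + (j.+1 + m.+1) = (m * n + m + j).+2)%N by ring.
by rewrite !addSn !addnS !factS; field; natr_neq0.
Qed.

Lemma fps_mul_fuss0 f n : fps_mul f (fuss m 0) n = f n.
Proof.
rewrite /fps_mul big_ord_recr /= subnn fuss_r0 mulr1 big1 ?add0r // => i _.
by rewrite /fuss /= subn_eq0 leqNgt ltn_ord mulr0.
Qed.

Lemma fps_mul_fussS f r n :
  fps_mul f (fuss m r.+1) n.+1 =
  fps_mul f (fuss m r) n.+1 + fps_mul f (fuss m (r + m.+1)) n.
Proof.
rewrite /fps_mul big_ord_recr [in RHS]big_ord_recr /= subnn !fuss_r0 addrAC.
congr (_ + _); rewrite -big_split; apply: eq_bigr => i _.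
have le_in : (i <= n)%N by rewrite -ltnS.
by rewrite subSn // fussS mulrDr.
Qed.

Lemma fps_mul_fuss a b n : fps_mul (fuss m a) (fuss m b) n = fuss m (a + b) n.
Proof.
elim: n b => [|n IHn] b; first by rewrite /fps_mul big_ord1 !fuss_r0 mulr1.
elim: b => [|b IHb]; first by rewrite fps_mul_fuss0 addn0.
by rewrite fps_mul_fussS IHb IHn [in RHS]addnS fussS addnA.
Qed.

End FussCatalan.

Lemma g_fuss n : (0 < n)%N -> g n = fuss 3 2 n / n.+1%:R.
Proof.
move=> n_gt0; rewrite /g eqn0Ngt n_gt0 /fuss /= !addn1 (factS n).
by field; natr_neq0.
Qed.

Lemma g_fussE k : g k = 2 * fuss 3 2 k - fuss 3 3 k - fuss 3 0 k.
Proof.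
case: k => [|k]; first by rewrite /g /= !fuss_r0; ring.
by rewrite g_fuss // (fussSr 3 1) /(fuss 3 0) /=; field; natr_neq0.
Qed.

Lemma fps_mul_gg n : (0 < n)%N ->
  fps_mul g g n =
  4 * fuss 3 4 n - 4 * fuss 3 5 n + fuss 3 6 n - 4 * fuss 3 2 n + 2 * fuss 3 3 n.
Proof.
move=> n_gt0.
have fuss30n : fuss 3 0 n = 0 by rewrite /fuss /= eqn0Ngt n_gt0.
have mul_fuss a b :
    \sum_(k < n.+1) fuss 3 a k * fuss 3 b (n - k)%N = fuss 3 (a + b) n.
  exact: fps_mul_fuss.
have expand (x2 x3 x0 y2 y3 y0 : rat) :
    (2 * x2 - x3 - x0) * (2 * y2 - y3 - y0) =
    4 * (x2 * y2) - 2 * (x2 * y3) - 2 * (x2 * y0) - 2 * (x3 * y2) + x3 * y3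
    + x3 * y0 - 2 * (x0 * y2) + x0 * y3 + x0 * y0 by ring.
rewrite /fps_mul; under eq_bigr => k _ do rewrite !g_fussE expand.
by rewrite !big_split /= !sumrN -!mulr_sumr !mul_fuss fuss30n; ring.
Qed.

Theorem mainTheorem2 (n : nat) (hn : (1 <= n)%N) :
  fps_mul g g n / g n =
  (10 * (n%:R - 1) * (n%:R ^+ 2 + 14 * n%:R + 12)) /
  (3 * (3 * n%:R + 5) * (3 * n%:R + 4) * (n%:R + 2)) :> rat.
Proof.
rewrite fps_mul_gg // g_fuss // !fussSr.
have b_neq0 := fuss_neq0 3 0 n.
by field; rewrite b_neq0 /=; natr_neq0.
Qed.
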